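(* Let $K$ be a commutative artinian ring and $R$ an artin $K$-algebra. For any pp pair $\varphi/\psi$ in the language of left $R$-modules, $\mathbb{F}_{\varphi/\psi}^*\cong\mathbb{A}_{\varphi/\psi}$ as functors $(R\text{-}\mathbf{Mod})^{\mathrm{op}}\to\mathbf{Ab}$.
   Context: $J=\bigoplus_i E(S_i)$ over representatives $S_i$ of simple $K$-modules, $M^*=\mathrm{Hom}_K(M,J)$. A pp formula $\theta(x_1,\dots,x_n)$ in the language of left $R$-modules is $\exists y_1,\dots,y_m\, A\bar x=B\bar y$ with $A,B$ matrices over $R$; $\theta(M)\subseteq M^n$ denotes its solution set in a left module $M$ (a subgroup, preserved by homomorphisms). A pp pair $\varphi/\psi$ consists of pp formulas in the same free variables with $\psi(M)\subseteq\varphi(M)$ for all $M$. $\mathbb{F}_{\varphi/\psi}:R\text{-}\mathbf{Mod}\to\mathbf{Ab}$ sends $M$ to $\varphi(M)/\psi(M)$; its dual $\mathbb{F}_{\varphi/\psi}^*$ sends $M$ to $(\varphi(M)/\psi(M))^*$ (a $K$-module dual, using that the values are $K$-modules). For a pp formula $\theta$ in $n$ variables, $\mathbb{A}_\theta(M)=\{\bar f\in (M^* )^n:\sum_i f_i(a_i)=0\ \forall \bar a\in\theta(M)\}$, and $\mathbb{A}_{\varphi/\psi}=\mathbb{A}_\psi/\mathbb{A}_\varphi$. *)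

From HB Require Import structures.
From mathcomp Require Import all_boot all_order all_algebra.
Set Implicit Arguments.
Unset Strict Implicit.
Unset Printing Implicit Defensive.
Import GRing.Theory.
Local Open Scope ring_scope.

Definition is_ideal (K : comNzRingType) (I : K -> Prop) : Prop :=
  I 0 /\ (forall a b, I a -> I b -> I (a + b)) /\ (forall a b, I b -> I (a * b)).

Definition artinian_ring (K : comNzRingType) : Prop :=
  forall I : nat -> K -> Prop,
    (forall k, is_ideal (I k)) ->
    (forall k x, I k.+1 x -> I k x) ->
    exists N, forall k, (N <= k)%N -> forall x, I k x <-> I N x.

Definition artin_algebra (K : comNzRingType) (R : algType K) : Prop :=
  exists s : seq R, forall r : R,
    exists c : 'I_(size s) -> K, r = \sum_(i < size s) c i *: s`_i.

Definition submod (K : comNzRingType) (V : lmodType K) (P : V -> Prop) : Prop :=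
  P 0 /\ (forall u v, P u -> P v -> P (u + v)) /\ (forall (k : K) v, P v -> P (k *: v)).

Definition simple_mod (K : comNzRingType) (V : lmodType K) : Prop :=
  (exists v : V, v <> 0) /\
  forall P : V -> Prop, submod P -> (forall v, P v -> v = 0) \/ (forall v, P v).

Definition iso_mod (K : comNzRingType) (U V : lmodType K) : Prop :=
  exists f : {linear U -> V}, bijective f.

Definition injective_mod (K : comNzRingType) (E : lmodType K) : Prop :=
  forall (A B : lmodType K) (i : {linear A -> B}) (g : {linear A -> E}),
    injective i -> exists h : {linear B -> E}, forall a, h (i a) = g a.

Definition inj_envelope (K : comNzRingType) (S E : lmodType K)
  (iota : {linear S -> E}) : Prop :=
  injective iota /\ injective_mod E /\
  forall P : E -> Prop, submod P -> (exists e, P e /\ e <> 0) ->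
    exists s, s <> 0 /\ P (iota s).

(* J is (isomorphic to) the direct sum of the injective envelopes E(S_i) of a
   system of representatives S_i of the isomorphism classes of simple K-modules.
   (For K artinian there are finitely many such classes.) *)
Definition is_J (K : comNzRingType) (J : lmodType K) : Prop :=
  exists (t : nat) (S E : 'I_t -> lmodType K)
         (iota : forall i, {linear S i -> E i})
         (inj : forall i, {linear E i -> J}) (pr : forall i, {linear J -> E i}),
    [/\ (forall i, simple_mod (S i)),
        (forall i j, iso_mod (S i) (S j) -> i = j),
        (forall S' : lmodType K, simple_mod S' -> exists i, iso_mod S' (S i)),
        (forall i, inj_envelope (iota i))
      & [/\ (forall i e, pr i (inj i e) = e),
            (forall i j e, i != j -> pr j (inj i e) = 0)
          & (forall x, x = \sum_i inj i (pr i x))]].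

(* theta(x_1..x_n) = exists y_1..y_m, A x = B y, with A : p x n, B : p x m *)
Record ppformula (R : nzRingType) (n : nat) := PPFormula {
  pp_p : nat; pp_m : nat;
  pp_A : 'M[R]_(pp_p, n); pp_B : 'M[R]_(pp_p, pp_m) }.

Definition ppsol (R : nzRingType) (n : nat) (theta : ppformula R n)
  (M : lmodType R) (x : 'I_n -> M) : Prop :=
  exists y : 'I_(pp_m theta) -> M, forall i : 'I_(pp_p theta),
    \sum_(j < n) pp_A theta i j *: x j = \sum_(k < pp_m theta) pp_B theta i k *: y k.

Arguments ppsol {R n} theta M x.

Definition pp_pair (R : nzRingType) (n : nat) (phi psi : ppformula R n) : Prop :=
  forall (M : lmodType R) (x : 'I_n -> M), ppsol psi M x -> ppsol phi M x.

Definition Kdual (K : comNzRingType) (R : algType K) (M : lmodType R)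
  (J : lmodType K) (f : M -> J) : Prop :=
  (forall x y, f (x + y) = f x + f y) /\ (forall (k : K) x, f (k%:A *: x) = k *: f x).

Definition annih (K : comNzRingType) (R : algType K) (n : nat)
  (theta : ppformula R n) (M : lmodType R) (J : lmodType K)
  (f : 'I_n -> M -> J) : Prop :=
  (forall i, Kdual (f i)) /\
  (forall x, ppsol theta M x -> \sum_(i < n) f i (x i) = 0).

Arguments annih {K R n} theta M J f.
Arguments Kdual {K R M J} f.

(* Elements of F^*_{phi/psi}(M) = Hom_K(phi(M)/psi(M), J), represented by maps
   g : M^n -> J that are K-linear on phi(M) and vanish on psi(M); two such maps
   represent the same element iff they agree on phi(M) (see eq_on_pp). *)
Definition Fdual (K : comNzRingType) (R : algType K) (n : nat)
  (phi psi : ppformula R n) (M : lmodType R) (J : lmodType K)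
  (g : ('I_n -> M) -> J) : Prop :=
  [/\ (forall x y, ppsol phi M x -> ppsol phi M y ->
         g (fun i => x i + y i) = g x + g y),
      (forall (k : K) x, ppsol phi M x -> g (fun i => k%:A *: x i) = k *: g x)
    & (forall x, ppsol psi M x -> g x = 0)].

Arguments Fdual {K R n} phi psi M J g.

Definition eq_on_pp (R : nzRingType) (n : nat) (phi : ppformula R n)
  (M : lmodType R) (J : Type) (g g' : ('I_n -> M) -> J) : Prop :=
  forall x, ppsol phi M x -> g x = g' x.
Arguments eq_on_pp {R n} phi {M J} g g'.

From HB Require Import structures.
From mathcomp Require Import all_boot all_order all_algebra.
From Stdlib Require Import ClassicalEpsilon FunctionalExtensionality.
Set Implicit Arguments.
Unset Strict Implicit.
Unset Printing Implicit Defensive.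
Import GRing.Theory.
Local Open Scope ring_scope.

(* The isomorphism sends [f] in [A_psi(M)] to the functional
   [x |-> \sum_i f_i (x_i)] on [phi(M)]; it vanishes on [psi(M)] by definition of
   [A_psi], and its kernel is [A_phi] by definition too.  The only real content
   is surjectivity: a [K]-linear map [phi(M) -> J] extends to [M^n] because [J],
   a finite direct sum of injective envelopes, is an injective [K]-module, and
   the components of the extension are the required [f_i]. *)

Definition asbool (P : Prop) : bool :=
  if excluded_middle_informative P then true else false.

Lemma asboolP (P : Prop) : reflect P (asbool P).
Proof. by rewrite /asbool; case: excluded_middle_informative => h; constructor. Qed.

Section PPSolutions.
Variables (R : nzRingType) (n : nat) (theta : ppformula R n) (M : lmodType R).

Lemma eq_ppsol (x y : 'I_n -> M) : x =1 y -> ppsol theta M x -> ppsol theta M y.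
Proof.
move=> exy [u hu]; exists u => i; rewrite -hu.
by apply: eq_bigr => j _; rewrite exy.
Qed.

Lemma ppsol0 : ppsol theta M (fun _ => 0).
Proof. by exists (fun _ => 0) => i; rewrite !big1 // => j _; rewrite scaler0. Qed.

Lemma ppsolD x y :
  ppsol theta M x -> ppsol theta M y -> ppsol theta M (fun i => x i + y i).
Proof.
case=> u hu [v hv]; exists (fun k => u k + v k) => i.
under eq_bigr do rewrite scalerDr.
by rewrite big_split /= hu hv -big_split; apply: eq_bigr => k _; rewrite scalerDr.
Qed.

End PPSolutions.

Lemma ppsolZ (K : comNzRingType) (R : algType K) n (theta : ppformula R n)
    (M : lmodType R) (k : K) x :
  ppsol theta M x -> ppsol theta M (fun i => k%:A *: x i).
Proof.
have scalerAC (r : R) (m : M) : r *: (k%:A *: m) = k%:A *: (r *: m).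
  by rewrite !scalerA -scalerAl mul1r -scalerAr mulr1.
case=> u hu; exists (fun j => k%:A *: u j) => i.
under eq_bigr do rewrite scalerAC.
by rewrite -scaler_sumr hu scaler_sumr; apply: eq_bigr => j _; rewrite scalerAC.
Qed.

Section ScalarRestriction.
Variables (K : comNzRingType) (R : algType K) (M : lmodType R).

Definition restrict_scalars : Type := M.
HB.instance Definition _ := GRing.Zmodule.on restrict_scalars.

Definition restrict_scale (k : K) (x : restrict_scalars) : restrict_scalars :=
  k%:A *: (x : M).

Lemma restrict_scaleA a b v :
  restrict_scale a (restrict_scale b v) = restrict_scale (a * b) v.
Proof. by rewrite /restrict_scale scalerA -scalerAl mul1r scalerA. Qed.

Lemma restrict_scale1 : left_id 1 restrict_scale.
Proof. by move=> v; rewrite /restrict_scale !scale1r. Qed.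

Lemma restrict_scaleDr : right_distributive restrict_scale +%R.
Proof. by move=> a u v; rewrite /restrict_scale scalerDr. Qed.

Lemma restrict_scaleDl v : {morph restrict_scale^~ v : a b / a + b}.
Proof. by move=> a b; rewrite /restrict_scale !scalerDl. Qed.

HB.instance Definition _ := GRing.Zmodule_isLmodule.Build K restrict_scalars
  restrict_scaleA restrict_scale1 restrict_scaleDr restrict_scaleDl.

End ScalarRestriction.
Arguments restrict_scalars {K R} M.

Section InjectiveExtension.
Variables (K : comNzRingType) (V J : lmodType K) (P : V -> Prop).
Hypotheses (P_submod : submod P) (J_injective : injective_mod J).

Definition submod_pred : pred V := fun v => asbool (P v).

Lemma submod_pred_closed : submod_closed submod_pred.
Proof.
case: P_submod => P0 [PD PZ]; split; first exact/asboolP.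
by move=> k u v /asboolP Pu /asboolP Pv; apply/asboolP/PD => //; apply: PZ.
Qed.

HB.instance Definition _ :=
  GRing.isSubmodClosed.Build K V submod_pred submod_pred_closed.

Definition subspace : Type := {v : V | submod_pred v}.
HB.instance Definition _ := [isSub of subspace for @sval _ _].
HB.instance Definition _ := [Choice of subspace by <:].
HB.instance Definition _ := [SubChoice_isSubLmodule of subspace by <:].

Variable g : V -> J.
Hypothesis g_linear_on : forall k u v, P u -> P v -> g (k *: u + v) = k *: g u + g v.

Definition restrict_to_subspace (u : subspace) : J := g (val u).

Lemma restrict_to_subspace_linear : linear restrict_to_subspace.
Proof.
move=> k u v; rewrite /restrict_to_subspace /= g_linear_on //.
  exact/asboolP/(valP u).
exact/asboolP/(valP v).
Qed.

HB.instance Definition _ := GRing.isLinear.Build K subspace J *:%R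
  restrict_to_subspace restrict_to_subspace_linear.

Lemma injective_extend : exists h : {linear V -> J}, forall v, P v -> h v = g v.
Proof.
have [h hval] := @J_injective subspace V val restrict_to_subspace val_inj.
exists h => v Pv.
have Pv' : submod_pred v by apply/asboolP.
exact: (hval (exist _ v Pv')).
Qed.

End InjectiveExtension.

Section InjectiveSum.
Variables (K : comNzRingType) (B J : lmodType K) (t : nat) (E : 'I_t -> lmodType K).
Variables (inj : forall i, {linear E i -> J}) (h : forall i, {linear B -> E i}).

Definition sum_comp (b : B) : J := \sum_i inj i (h i b).

Lemma sum_comp_linear : linear sum_comp.
Proof.
move=> k a b; rewrite /sum_comp scaler_sumr -big_split /=.
by apply: eq_bigr => i _; rewrite !linearP.
Qed.

HB.instance Definition _ :=
  GRing.isLinear.Build K B J *:%R sum_comp sum_comp_linear.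

End InjectiveSum.

Lemma injective_mod_sum (K : comNzRingType) (J : lmodType K) (t : nat)
    (E : 'I_t -> lmodType K) (inj : forall i, {linear E i -> J})
    (pr : forall i, {linear J -> E i}) :
  (forall i, injective_mod (E i)) -> (forall x, x = \sum_i inj i (pr i x)) ->
  injective_mod J.
Proof.
move=> E_injective J_sum A B i g i_inj.
have ext j : exists h : {linear B -> E j}, forall a, h (i a) = pr j (g a).
  exact: (E_injective j A B i (pr j \o g)%FUN i_inj).
pose h j := proj1_sig (constructive_indefinite_description _ (ext j)).
have hP j a : h j (i a) = pr j (g a).
  exact: (proj2_sig (constructive_indefinite_description _ (ext j))).
exists (sum_comp inj h) => a; rewrite [RHS]J_sum.
by apply: eq_bigr => j _; rewrite hP.
Qed.

Lemma is_J_injective (K : comNzRingType) (J : lmodType K) : is_J J -> injective_mod J.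
Proof.
case=> t [S [E [iota [inj [pr [_ _ _ envelope [_ _ J_sum]]]]]]].
apply: (injective_mod_sum _ J_sum) => i.
by case: (envelope i) => _ [].
Qed.

Definition pairing (M : Type) (J : zmodType) (n : nat)
    (f : 'I_n -> M -> J) (x : 'I_n -> M) : J :=
  \sum_(i < n) f i (x i).

Section Pairing.
Variables (K : comNzRingType) (R : algType K) (M : lmodType R) (J : lmodType K).
Variables (n : nat) (phi psi : ppformula R n).

Lemma pairing_Fdual f : annih psi M J f -> Fdual phi psi M J (pairing f).
Proof.
case=> f_dual f_psi; split=> [x y _ _|k x _|//].
  by rewrite /pairing -big_split; apply: eq_bigr => i _; case: (f_dual i) => ->.
by rewrite /pairing scaler_sumr; apply: eq_bigr => i _; case: (f_dual i) => _ ->.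
Qed.

Lemma pairing_kernel f : annih psi M J f ->
  (eq_on_pp phi (pairing f) (fun _ => 0) <-> annih phi M J f).
Proof. by case=> f_dual _; split=> [f_phi | [_ f_phi]]. Qed.

Lemma pp_functional_extend (g : ('I_n -> M) -> J) :
  injective_mod J ->
  (forall x y, ppsol phi M x -> ppsol phi M y ->
     g (fun i => x i + y i) = g x + g y) ->
  (forall (k : K) x, ppsol phi M x -> g (fun i => k%:A *: x i) = k *: g x) ->
  exists f : 'I_n -> M -> J, (forall i, Kdual (f i)) /\
    forall x, ppsol phi M x -> pairing f x = g x.
Proof.
move=> J_injective gD gZ.
pose V := {ffun 'I_n -> restrict_scalars M}.
pose P (v : V) := ppsol phi M (fun i => v i).
have P_submod : submod P.
  split; first by apply: eq_ppsol (ppsol0 _ _) => i; rewrite ffunE.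
  split=> [u v Pu Pv | k v Pv].
    by apply: eq_ppsol (ppsolD Pu Pv) => i; rewrite ffunE.
  by apply: eq_ppsol (ppsolZ k Pv) => i; rewrite ffunE.
have g_linear_on k u v : P u -> P v ->
    g (fun i => (k *: u + v) i) = k *: g (fun i => u i) + g (fun i => v i).
  move=> Pu Pv; rewrite -gZ // -gD //; last exact: ppsolZ.
  by congr g; apply: functional_extensionality => i; rewrite !ffunE.
have [h h_ext] := injective_extend P_submod J_injective g_linear_on.
pose delta i (m : M) : V := [ffun j => if j == i then m else 0].
exists (fun i m => h (delta i m)); split=> [i|x Px].
  split=> [m m'|k m].
    rewrite -raddfD; congr (h _); apply/ffunP => j; rewrite !ffunE.
    by case: (j == i); rewrite ?addr0.
  rewrite -linearZ; congr (h _); apply/ffunP => j; rewrite !ffunE.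
  by case: (j == i); rewrite //= /restrict_scale scaler0.
pose xv : V := [ffun i => x i].
have Pxv : P xv by apply: eq_ppsol Px => i; rewrite ffunE.
rewrite /pairing -raddf_sum.
have -> : \sum_i delta i (x i) = xv.
  apply/ffunP => j; rewrite sum_ffunE ffunE (bigD1 j) //= ffunE eqxx big1 ?addr0 //.
  by move=> i /negbTE ne; rewrite ffunE eq_sym ne.
have -> : g x = g (fun i => xv i).
  by congr g; apply: functional_extensionality => i; rewrite ffunE.
exact: h_ext.
Qed.

Lemma pairing_surjective (g : ('I_n -> M) -> J) :
  injective_mod J -> pp_pair phi psi -> Fdual phi psi M J g ->
  exists f, annih psi M J f /\ eq_on_pp phi (pairing f) g.
Proof.
move=> J_injective phi_psi [gD gZ g_psi].
have [f [f_dual f_g]] := pp_functional_extend J_injective gD gZ.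
exists f; split=> [|x Px]; last exact: f_g.
by split=> // x Px; rewrite -[LHS]/(pairing f x) f_g ?g_psi //; apply: phi_psi.
Qed.

End Pairing.

Theorem mainTheorem2 (K : comNzRingType) (R : algType K) (J : lmodType K)
  (n : nat) (phi psi : ppformula R n) :
  artinian_ring K -> artin_algebra R -> is_J J -> pp_pair phi psi ->
  exists beta : forall M : lmodType R, ('I_n -> M -> J) -> ('I_n -> M) -> J,
    [/\ (forall (M : lmodType R) f, annih psi M J f -> Fdual phi psi M J (beta M f)),
        (forall (M : lmodType R) f f', annih psi M J f -> annih psi M J f' ->
           eq_on_pp phi (beta M (fun i m => f i m + f' i m))
                        (fun x => beta M f x + beta M f' x)),
        (forall (M : lmodType R) g, Fdual phi psi M J g ->
           exists f, annih psi M J f /\ eq_on_pp phi (beta M f) g),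
        (forall (M : lmodType R) f, annih psi M J f ->
           (eq_on_pp phi (beta M f) (fun _ => 0) <-> annih phi M J f))
      & (forall (M N : lmodType R) (h : {linear M -> N}) f, annih psi N J f ->
           eq_on_pp phi (beta M (fun i m => f i (h m)))
                        (fun x => beta N f (fun i => h (x i))))].
Proof.
move=> _ _ /is_J_injective J_injective phi_psi.
exists (fun M => @pairing M J n); split.
- by move=> M f; apply: pairing_Fdual.
- by move=> M f f' _ _ x _; rewrite /pairing -big_split.
- by move=> M g; apply: pairing_surjective.
- by move=> M f; apply: pairing_kernel.
- by [].
Qed.
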